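(* Let $\phi:A_1\to A_2$ be an isomorphism of double Poisson algebras over $B=\bigoplus_{s\in I}\Bbbk e_s$. If $A_1,A_2$ are Hamiltonian algebras with moment maps $\mu_1,\mu_2$, then $\mu_2-\phi(\mu_1)\in B$ and $\operatorname{Cas}(A_1)=\operatorname{Cas}(A_2)=B$. In particular, a moment map on a double Poisson algebra is unique up to the addition of an element of $B$.
   Context: $\Bbbk$ field of characteristic $0$; algebras associative, unital, finitely generated; $B=\bigoplus_{s\in I}\Bbbk e_s$ with orthogonal idempotents summing to $1$. Sweedler notation, $(d'\otimes d'')^\circ=d''\otimes d'$, outer bimodule $a(d'\otimes d'')b=ad'\otimes d''b$. A $B$-linear double bracket: bilinear $\{\!\{-,-\}\!\}:A\times A\to A\otimes A$, $\{\!\{a,b\}\!\}=-\{\!\{b,a\}\!\}^\circ$, $\{\!\{a,bc\}\!\}=\{\!\{a,b\}\!\}c+b\{\!\{a,c\}\!\}$, zero if an argument lies in $B$. Double Poisson: the triple bracket $\{\!\{a,\{\!\{b,c\}\!\}'\}\!\}\otimes\{\!\{b,c\}\!\}''+\tau(\{\!\{b,\{\!\{c,a\}\!\}'\}\!\}\otimes\{\!\{c,a\}\!\}'')+\tau^2(\{\!\{c,\{\!\{a,b\}\!\}'\}\!\}\otimes\{\!\{a,b\}\!\}'')$ vanishes, $\tau(a_1\otimes a_2\otimes a_3)=a_3\otimes a_1\otimes a_2$. A moment map is $\mu=\sum_s\mu_s$, $\mu_s\in e_sAe_s$, with $\{\!\{\mu_s,a\}\!\}=ae_s\otimes e_s-e_s\otimes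 e_sa$ for all $a$; Hamiltonian algebra = double Poisson algebra with moment map. An isomorphism of double Poisson algebras is a $B$-algebra isomorphism $\phi$ with $\{\!\{\phi a,\phi b\}\!\}_2=(\phi\otimes\phi)\{\!\{a,b\}\!\}_1$. The set of Casimir elements is $\operatorname{Cas}(A)=\{a\in A\mid\{\!\{a,b\}\!\}=0\text{ for all }b\in A\}$. *)

From HB Require Import structures.
From mathcomp Require Import all_boot all_order all_algebra.
Set Implicit Arguments. Unset Strict Implicit. Unset Printing Implicit Defensive.
Import Order.TTheory GRing.Theory Num.Theory.
Local Open Scope ring_scope.

(* Tensors over the field k are represented by finite lists of pure tensors.
   Two such lists denote the same element of A (x) A (resp. A (x) A (x) A) iff
   they agree under every pairing with linear functionals; over a field this is
   exactly equality in the tensor product (A (x) A embeds in (A* (x) A* )* ). *)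
Section Tensors.
Variables (k : fieldType) (A : lmodType k).

Definition tens2 := seq (A * A).
Definition tens3 := seq (A * A * A).

Definition tev2 (t : tens2) (f g : {scalar A}) : k :=
  \sum_(p <- t) f p.1 * g p.2.
Definition tev3 (t : tens3) (f g h : {scalar A}) : k :=
  \sum_(p <- t) f p.1.1 * g p.1.2 * h p.2.

Definition teq2 (t u : tens2) : Prop := forall f g, tev2 t f g = tev2 u f g.
Definition teq3 (t u : tens3) : Prop := forall f g h, tev3 t f g h = tev3 u f g h.

Definition tscale (c : k) (t : tens2) : tens2 := [seq (c *: p.1, p.2) | p <- t].
Definition tflip (t : tens2) : tens2 := [seq (p.2, p.1) | p <- t].
Definition tau3 (p : A * A * A) : A * A * A := (p.2, p.1.1, p.1.2).
End Tensors.

Section DoublePoisson.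
Variables (k : fieldType) (I : finType) (A : algType k).

(* outer bimodule structure: a (d' (x) d'') b = a d' (x) d'' b *)
Definition tlmul (a : A) (t : tens2 A) : tens2 A := [seq (a * p.1, p.2) | p <- t].
Definition trmul (t : tens2 A) (b : A) : tens2 A := [seq (p.1, p.2 * b) | p <- t].

Definition idem_system (e : I -> A) : Prop :=
  (forall s t, e s * e t = if s == t then e s else 0) /\ \sum_s e s = 1.

(* membership in (the image of) B = (+)_s k e_s *)
Definition inB (e : I -> A) (a : A) : Prop :=
  exists lam : I -> k, a = \sum_s lam s *: e s.

Definition fin_gen_alg : Prop :=
  exists gens : seq A, forall P : A -> Prop,
    (forall x, x \in gens -> P x) -> P 1 ->
    (forall x y, P x -> P y -> P (x + y)) ->
    (forall (c : k) x, P x -> P (c *: x)) ->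
    (forall x y, P x -> P y -> P (x * y)) ->
    forall a, P a.

Definition double_bracket (e : I -> A) (dbr : A -> A -> tens2 A) : Prop :=
  [/\
      (forall (c : k) a b x, teq2 (dbr (c *: a + b) x) (tscale c (dbr a x) ++ dbr b x)),
      (forall (c : k) a b x, teq2 (dbr x (c *: a + b)) (tscale c (dbr x a) ++ dbr x b)),
      (forall a b, teq2 (dbr a b) (tscale (-1) (tflip (dbr b a)))),
      (forall a b c, teq2 (dbr a (b * c)) (trmul (dbr a b) c ++ tlmul b (dbr a c))) &
      (forall a x, inB e a -> teq2 (dbr a x) [::] /\ teq2 (dbr x a) [::])].

Definition tbr_part (dbr : A -> A -> tens2 A) (a b c : A) : tens3 A :=
  flatten [seq [seq (p.1, p.2, q.2) | p <- dbr a q.1] | q <- dbr b c].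

Definition triple_bracket (dbr : A -> A -> tens2 A) (a b c : A) : tens3 A :=
  tbr_part dbr a b c ++ map (@tau3 _ _) (tbr_part dbr b c a)
    ++ map (fun p => tau3 (tau3 p)) (tbr_part dbr c a b).

Definition double_Poisson (e : I -> A) (dbr : A -> A -> tens2 A) : Prop :=
  double_bracket e dbr /\ forall a b c, teq3 (triple_bracket dbr a b c) [::].

(* mu = sum_s mu_s is a moment map *)
Definition moment_map (e : I -> A) (dbr : A -> A -> tens2 A) (mu : I -> A) : Prop :=
  forall s, (exists x, mu s = e s * x * e s) /\
    forall a, teq2 (dbr (mu s) a) [:: (a * e s, e s); (- e s, e s * a)].

Definition Casimir (dbr : A -> A -> tens2 A) (a : A) : Prop :=
  forall b, teq2 (dbr a b) [::].
End DoublePoisson.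

Definition dP_iso (k : fieldType) (I : finType) (A1 A2 : algType k)
    (e1 : I -> A1) (e2 : I -> A2)
    (dbr1 : A1 -> A1 -> tens2 A1) (dbr2 : A2 -> A2 -> tens2 A2)
    (phi : {lrmorphism A1 -> A2}) : Prop :=
  [/\ bijective phi, (forall s, phi (e1 s) = e2 s) &
      forall a b, teq2 (dbr2 (phi a) (phi b))
                       [seq (phi p.1, phi p.2) | p <- dbr1 a b]].

From HB Require Import structures.
From mathcomp Require Import all_boot all_order all_algebra.
From mathcomp Require Import boolp classical_sets.
Import GRing.Theory.
Local Open Scope ring_scope.

Set Implicit Arguments. Unset Strict Implicit.

(** Moment maps are compared through Casimirs.  Two moment maps have the same
    double bracket with everything, so their difference is a Casimir; and an
    isomorphism carries a moment map to a moment map.  Conversely, if [a] is a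
    Casimir then cyclic antisymmetry gives [{{mu_s, a}} = 0], i.e.
    [a e_s (x) e_s = e_s (x) e_s a]; pairing with linear functionals (which
    separate points, by a Zorn argument) forces [a e_s] to be a multiple of
    [e_s], whence [a = sum_s a e_s] lies in [B]. *)

Section Functionals.
Variables (k : fieldType) (V : lmodType k).

Definition lin_closed (W : set V) :=
  forall (c : k) a b, W a -> W b -> W (c *: a + b).

Lemma scalar_of_linear (g : V -> k) :
  (forall c x y, g (c *: x + y) = c * g x + g y) ->
  exists h : {scalar V}, h =1 g.
Proof.
move=> lin_g; pose H := GRing.isLinear.Build _ _ _ _ g lin_g.
by exists (HB.pack_for {scalar V} g H).
Qed.

Lemma maximal_lin_closed_avoiding (v : V) :
  exists W : set V, [/\ lin_closed W, ~ W v &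
    forall W', (W `<` W')%classic -> lin_closed W' -> W' v].
Proof.
pose P W := lin_closed W /\ ~ W v.
have [W [[Wcl Wv] Wmax]] : exists W, P W /\ forall W', (W `<` W')%classic -> ~ P W'.
  apply: Zorn_bigcup => F FP Ftot; split; last by case=> X FX; apply: (FP X FX).2.
  move=> c a b [X FX Xa] [Y FY Yb].
  have [XY|YX] := Ftot X Y FX FY.
  - by exists Y => //; apply: (FP Y FY).1 => //; apply: XY.
  - by exists X => //; apply: (FP X FX).1 => //; apply: YX.
exists W; split=> // W' WW' W'cl; apply: contrapT => W'v.
exact: (Wmax W' WW').
Qed.

Lemma hyperplane_complement (v : V) : v != 0 ->
  exists W : set V,
    [/\ lin_closed W, W 0, ~ W v & forall x, exists c, W (x - c *: v)].
Proof.
move=> v0; have [W [Wcl Wv Wmax]] := maximal_lin_closed_avoiding v.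
have W0 : W 0.
  apply: contrapT => W0.
  suff [//|/eqP] : (W `|` [set 0])%classic v by rewrite (negbTE v0).
  apply: Wmax.
  - by split=> [x|]; [left | move/(_ 0); rewrite /setU /=; tauto].
  - move=> c a b [Wa|->] [Wb|->].
    + by left; apply: Wcl.
    + by left; have := Wcl (c - 1) a a Wa Wa; rewrite scalerBl scale1r subrK addr0.
    + by left; rewrite scaler0 add0r.
    + by right; rewrite scaler0 addr0.
exists W; split=> // x; apply: contrapT => x_notin.
pose W' y := exists w (c : k), W w /\ y = w + c *: x.
have : W' v.
  apply: Wmax.
  - split=> [y Wy|W'W]; first by exists y, 0; rewrite scale0r addr0.
    apply: x_notin; exists 0; rewrite scale0r subr0; apply: W'W.
    by exists 0, 1; rewrite scale1r add0r.
  - move=> c _ _ [w1 [c1 [Ww1 ->]]] [w2 [c2 [Ww2 ->]]].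
    exists (c *: w1 + w2), (c * c1 + c2); split; first exact: Wcl.
    by rewrite scalerDr scalerA scalerDl addrACA.
case=> w [c [Ww vE]]; have [c0|c_neq0] := eqVneq c 0.
  by apply: Wv; rewrite vE c0 scale0r addr0.
apply: x_notin; exists c^-1.
suff -> : x - c^-1 *: v = (- c^-1) *: w + 0 by apply: Wcl.
by rewrite vE scalerDr scalerA mulVf // scale1r addr0 scaleNr opprD addrCA subrr addr0.
Qed.

Lemma scalar_eq1_exists (v : V) : v != 0 -> exists f : {scalar V}, f v = 1.
Proof.
move=> v0; have [W [Wcl W0 Wv Wcompl]] := hyperplane_complement v0.
have coord_uniq x c d : W (x - c *: v) -> W (x - d *: v) -> c = d.
  move=> Wc Wd; apply: contrapT => /eqP c_neq_d; apply: Wv.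
  have := Wcl (-1) _ _ Wc Wd; rewrite scaleN1r opprB addrA subrK -scalerBl => Wcd.
  have := Wcl (c - d)^-1 _ _ Wcd W0.
  by rewrite scalerA mulVf ?subr_eq0 // scale1r addr0.
pose g x := sval (cid (Wcompl x)).
have gP x : W (x - g x *: v) by rewrite /g; case: cid.
have [f fE] : exists f : {scalar V}, f =1 g.
  apply: scalar_of_linear => c x y; apply: (coord_uniq (c *: x + y)); first exact: gP.
  have := Wcl c _ _ (gP x) (gP y).
  by rewrite scalerBr addrACA -opprD scalerA -scalerDl.
by exists f; rewrite fE; apply: (coord_uniq v); rewrite ?scale1r ?subrr.
Qed.

Lemma scalar_separates (x : V) : (forall f : {scalar V}, f x = 0) -> x = 0.
Proof.
move=> fx0; apply: contrapT => /eqP x0; have [f fx1] := scalar_eq1_exists x0.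
by move: (fx0 f); rewrite fx1 => /eqP; rewrite oner_eq0.
Qed.

Lemma colinear_of_scalar_identity (u v w : V) : v != 0 ->
  (forall f g : {scalar V}, f u * g v = f v * g w) -> exists c : k, u = c *: v.
Proof.
move=> v0 uvw; have [g gv1] := scalar_eq1_exists v0.
exists (g w); apply/eqP; rewrite -subr_eq0; apply/eqP/scalar_separates => f.
by rewrite linearB linearZ /= -[f u]mulr1 -gv1 uvw mulrC subrr.
Qed.

End Functionals.

Section TensorEvaluation.
Variables (k : fieldType) (V : lmodType k).
Implicit Types (t u : tens2 V) (f g : {scalar V}).

Lemma tev2_nil f g : tev2 [::] f g = 0.
Proof. exact: big_nil. Qed.

Lemma tev2_cat t u f g : tev2 (t ++ u) f g = tev2 t f g + tev2 u f g.
Proof. exact: big_cat. Qed.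

Lemma tev2_scale c t f g : tev2 (tscale c t) f g = c * tev2 t f g.
Proof.
rewrite /tev2 big_map mulr_sumr; apply: eq_bigr => p _.
by rewrite linearZ mulrA.
Qed.

Lemma tev2_flip t f g : tev2 (tflip t) f g = tev2 t g f.
Proof. by rewrite /tev2 big_map; apply: eq_bigr => p _; rewrite mulrC. Qed.

End TensorEvaluation.

Lemma tev2_map (k : fieldType) (V1 V2 : lmodType k) (phi : {linear V1 -> V2})
    (t : tens2 V1) (f g : {scalar V2}) :
  tev2 [seq (phi p.1, phi p.2) | p <- t] f g = tev2 t (f \o phi) (g \o phi).
Proof. exact: big_map. Qed.

Lemma teq2_map (k : fieldType) (V1 V2 : lmodType k) (phi : {linear V1 -> V2})
    (t u : tens2 V1) :
  teq2 t u -> teq2 [seq (phi p.1, phi p.2) | p <- t] [seq (phi p.1, phi p.2) | p <- u].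
Proof. by move=> tu f g; rewrite !tev2_map tu. Qed.

Section DoubleBracket.
Variables (k : fieldType) (I : finType) (A : algType k).
Variables (e : I -> A) (dbr : A -> A -> tens2 A).
Hypothesis dbr_bracket : double_bracket e dbr.

Lemma dbr_scalar_l (x : A) (f g : {scalar A}) :
  exists h : {scalar A}, forall a, h a = tev2 (dbr a x) f g.
Proof.
apply: scalar_of_linear => c a b; case: dbr_bracket => linl _ _ _ _.
by rewrite linl tev2_cat tev2_scale.
Qed.

Lemma tev2_dbrBl (a b x : A) (f g : {scalar A}) :
  tev2 (dbr (a - b) x) f g = tev2 (dbr a x) f g - tev2 (dbr b x) f g.
Proof. by have [h hE] := dbr_scalar_l x f g; rewrite -!hE raddfB. Qed.

Lemma tev2_dbr_suml (F : I -> A) (x : A) (f g : {scalar A}) :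
  tev2 (dbr (\sum_s F s) x) f g = \sum_s tev2 (dbr (F s) x) f g.
Proof.
have [h hE] := dbr_scalar_l x f g; rewrite -hE raddf_sum.
by apply: eq_bigr => s _; apply: hE.
Qed.

Lemma Casimir_of_inB (a : A) : inB e a -> Casimir dbr a.
Proof. by case: dbr_bracket => _ _ _ _ vanish aB b; case: (vanish a b aB). Qed.

Lemma moment_map_sub_Casimir (mu mu' : I -> A) :
  moment_map e dbr mu -> moment_map e dbr mu' ->
  Casimir dbr (\sum_s mu' s - \sum_s mu s).
Proof.
move=> mm mm' b f g; rewrite tev2_dbrBl !tev2_dbr_suml tev2_nil.
apply/eqP; rewrite subr_eq0; apply/eqP/eq_bigr => s _.
by rewrite (mm s).2 (mm' s).2.
Qed.

Lemma inB_of_Casimir (mu : I -> A) (a : A) : idem_system e ->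
  moment_map e dbr mu -> Casimir dbr a -> inB e a.
Proof.
move=> [_ sum_e] mm Ca.
have a_e s : exists c : k, a * e s = c *: e s.
  have [->|es0] := eqVneq (e s) 0; first by exists 0; rewrite mulr0 scaler0.
  apply: (colinear_of_scalar_identity (w := e s * a)) => // f g.
  have : tev2 (dbr (mu s) a) f g = 0.
    case: dbr_bracket => _ _ antisym _ _.
    by rewrite antisym tev2_scale tev2_flip Ca tev2_nil mulr0.
  rewrite (mm s).2 /tev2 !big_cons big_nil addr0 /= linearN mulNr.
  by move/eqP; rewrite subr_eq0 => /eqP.
have [lam lamE] := fin_all_exists a_e.
exists lam; rewrite -[a]mulr1 -sum_e mulr_sumr.
by apply: eq_bigr => s _; rewrite lamE.
Qed.

Lemma Casimir_iff_inB (mu : I -> A) : idem_system e ->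
  moment_map e dbr mu -> forall a, Casimir dbr a <-> inB e a.
Proof. by move=> idem mm a; split; [apply: inB_of_Casimir | apply: Casimir_of_inB]. Qed.

End DoubleBracket.

Lemma moment_map_iso (k : fieldType) (I : finType) (A1 A2 : algType k)
    (e1 : I -> A1) (e2 : I -> A2)
    (dbr1 : A1 -> A1 -> tens2 A1) (dbr2 : A2 -> A2 -> tens2 A2)
    (phi : {lrmorphism A1 -> A2}) (mu : I -> A1) :
  dP_iso e1 e2 dbr1 dbr2 phi -> moment_map e1 dbr1 mu ->
  moment_map e2 dbr2 (phi \o mu).
Proof.
move=> [[psi _ psiK] phi_e phi_dbr] mm s; split.
  by have [x mu_s] := (mm s).1; exists (phi x); rewrite /= mu_s !rmorphM -!phi_e.
move=> a f g; rewrite /= -[a]psiK phi_dbr (teq2_map phi ((mm s).2 (psi a))) /=.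
by rewrite !rmorphM rmorphN -!phi_e; reflexivity.
Qed.

Theorem mainTheorem9 (k : fieldType) (I : finType) (A1 A2 : algType k)
    (e1 : I -> A1) (e2 : I -> A2)
    (dbr1 : A1 -> A1 -> tens2 A1) (dbr2 : A2 -> A2 -> tens2 A2)
    (phi : {lrmorphism A1 -> A2}) (mu1 : I -> A1) (mu2 : I -> A2) :
  [pchar k] =i pred0 ->
  fin_gen_alg A1 -> fin_gen_alg A2 ->
  idem_system e1 -> idem_system e2 ->
  double_Poisson e1 dbr1 -> double_Poisson e2 dbr2 ->
  dP_iso e1 e2 dbr1 dbr2 phi ->
  moment_map e1 dbr1 mu1 -> moment_map e2 dbr2 mu2 ->
  [/\ inB e2 (\sum_s mu2 s - phi (\sum_s mu1 s)),
      (forall a, Casimir dbr1 a <-> inB e1 a),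
      (forall a, Casimir dbr2 a <-> inB e2 a) &
      (* in particular: moment maps on A1 are unique up to B *)
      (forall mu1' : I -> A1, moment_map e1 dbr1 mu1' ->
         inB e1 (\sum_s mu1' s - \sum_s mu1 s))].
Proof.
move=> _ _ _ idem1 idem2 [br1 _] [br2 _] iso mm1 mm2.
have Cas1 := Casimir_iff_inB br1 idem1 mm1.
have Cas2 := Casimir_iff_inB br2 idem2 mm2.
split=> // [|mu1' mm1']; [apply/Cas2; rewrite raddf_sum | apply/Cas1].
- exact (moment_map_sub_Casimir br2 (moment_map_iso iso mm1) mm2).
- exact (moment_map_sub_Casimir br1 mm1 mm1').
Qed.
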